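(* In the category of pointed Frölicher spaces, let $i:A\to X$ be a basepoint-preserving smooth map. Set $i^0=i$ and, for $n\ge1$, let $i^n:\operatorname{cod}(i^{n-1})\to\mathbf T_{i^{n-1}}$ be the canonical inclusion $y\mapsto[y]$ of the codomain of $i^{n-1}$ into its flattened mapping cone. Then the infinite sequence $$A\xrightarrow{i}X\xrightarrow{i^1}\mathbf T_i\xrightarrow{i^2}\mathbf T_{i^1}\xrightarrow{i^3}\mathbf T_{i^2}\to\cdots$$ is right exact, i.e. every two consecutive maps $U\xrightarrow{a}V\xrightarrow{b}W'$ in it form a right exact sequence.
   Context: A Frölicher space is a triple $(X,\mathcal C_X,\mathcal F_X)$ with $\mathcal C_X\subseteq X^{\mathbb R}$, $\mathcal F_X\subseteq\mathbb R^X$, such that $\mathcal F_X=\{f\mid f\circ c\in C^\infty(\mathbb R,\mathbb R)\ \forall c\in\mathcal C_X\}$ and $\mathcal C_X=\{c\mid f\circ c\in C^\infty(\mathbb R,\mathbb R)\ \forall f\in\mathcal F_X\}$. Smooth maps: $g\circ\varphi\in\mathcal F_X$ for all $g\in\mathcal F_Y$. Subspaces carry the initial structure, products the structure generated by $f\circ\pi_i$, coproducts, quotients and pushouts the final structure. $I$ is $[0,1]$ with the subspace structure from $\mathbb R$; $\mathbf I$ is $[0,1]$ with the structure generated by those structure functions of $I$ that are constant on $[0,\epsilon)$ and on $(1-\epsilon,1]$ for some $0<\epsilon<1/4$. For smooth $f:X\to Y$, the flattened mapping cylinder $\mathbf I_f$ is the quotient of $(\mathbf I\times X)\sqcup Y$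 by $(1,x)\sim f(x)$, elements $[t,x]$, $[y]$; in the pointed setting (basepoint $x_0$), the flattened mapping cone $\mathbf T_f$ is the quotient of $\mathbf I_f$ collapsing $(\{0\}\times X)\cup(\mathbf I\times\{x_0\})$ to its basepoint. For pointed $X,W$, $[X,W]$ is the set of basepoint-preserving smooth maps modulo pointed smooth homotopy (smooth $H:I\times X\to W$ with $H(t,x_0)=w_0$), pointed by the constant class. A sequence $U\xrightarrow{a}V\xrightarrow{b}Z$ is right exact if for every pointed Frölicher space $W$, $[Z,W]\xrightarrow{b^*}[V,W]\xrightarrow{a^*}[U,W]$ is exact as pointed sets ($\operatorname{im}b^*=(a^* )^{-1}(\ast)$). *)

From Stdlib Require Import Reals Relations.
Open Scope R_scope.

Definition smoothR (f : R -> R) : Prop :=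
  exists D : nat -> R -> R,
    (forall x, D O x = f x) /\
    (forall n x, derivable_pt_lim (D n) x (D (S n) x)).

Record Frol := MkFrol {
  fcar :> Type;
  curves : (R -> fcar) -> Prop;
  funs : (fcar -> R) -> Prop;
  funs_spec : forall f, funs f <-> (forall c, curves c -> smoothR (fun t => f (c t)));
  curves_spec : forall c, curves c <-> (forall f, funs f -> smoothR (fun t => f (c t)))
}.

Definition smooth (X Y : Frol) (phi : X -> Y) : Prop :=
  forall g, funs Y g -> funs X (fun x => g (phi x)).

Definition gen_funs (X : Type) (F0 : (X -> R) -> Prop) : Frol.
Proof.
  refine (MkFrol X
    (fun c => forall g, F0 g -> smoothR (fun t => g (c t)))
    (fun f => forall c, (forall g, F0 g -> smoothR (fun t => g (c t))) ->
                        smoothR (fun t => f (c t))) _ _).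
  - intro f; split; intro H; exact H.
  - intro c; split.
    + intros Hc f Hf; exact (Hf c Hc).
    + intros H g Hg; apply H; intros c' Hc'; exact (Hc' g Hg).
Defined.

Definition gen_curves (X : Type) (C0 : (R -> X) -> Prop) : Frol.
Proof.
  refine (MkFrol X
    (fun c => forall f, (forall c', C0 c' -> smoothR (fun t => f (c' t))) ->
                        smoothR (fun t => f (c t)))
    (fun f => forall c, C0 c -> smoothR (fun t => f (c t))) _ _).
  - intro f; split.
    + intros Hf c Hc; exact (Hc f Hf).
    + intros H c Hc; apply H; intros g Hg; exact (Hg c Hc).
  - intro c; split; intro H; exact H.
Defined.

(** The real line (structure generated by the identity; its smooth functions
    are the C^infinity ones by Boman's theorem). *)
Definition Rline : Frol := gen_funs R (fun f => f = fun x => x).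

Definition subspace (X : Frol) (P : X -> Prop) : Frol :=
  gen_funs {x : X | P x}
    (fun h => exists g, funs X g /\ h = fun p => g (proj1_sig p)).

Definition unit_int : Type := {t : R | 0 <= t <= 1}.

Definition Iunit : Frol := subspace Rline (fun t => 0 <= t <= 1).

Definition zeroI : unit_int := exist _ 0 (conj (Rle_refl 0) Rle_0_1).
Definition oneI : unit_int := exist _ 1 (conj Rle_0_1 (Rle_refl 1)).

Definition IF : Frol :=
  gen_funs unit_int
    (fun f => funs Iunit f /\
       exists eps, 0 < eps < 1/4 /\
         (forall s t : unit_int, proj1_sig s < eps -> proj1_sig t < eps -> f s = f t) /\
         (forall s t : unit_int, 1 - eps < proj1_sig s -> 1 - eps < proj1_sig t -> f s = f t)).

Definition prodF (X Y : Frol) : Frol :=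
  gen_funs (X * Y)
    (fun h => (exists f, funs X f /\ h = fun p => f (fst p)) \/
              (exists g, funs Y g /\ h = fun p => g (snd p))).

Definition coprodF (X Y : Frol) : Frol :=
  gen_curves (X + Y)%type
    (fun c => (exists c1, curves X c1 /\ c = fun t => inl (c1 t)) \/
              (exists c2, curves Y c2 /\ c = fun t => inr (c2 t))).

Definition qcar (T : Type) (Rel : T -> T -> Prop) : Type :=
  {P : T -> Prop | exists t, P = clos_refl_sym_trans T Rel t}.

Definition qproj {T : Type} (Rel : T -> T -> Prop) (t : T) : qcar T Rel :=
  exist _ (clos_refl_sym_trans T Rel t) (ex_intro _ t eq_refl).

Definition quotF (X : Frol) (Rel : X -> X -> Prop) : Frol :=
  gen_curves (qcar X Rel)
    (fun c => exists c0, curves X c0 /\ c = fun t => qproj Rel (c0 t)).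

Definition cyl_rel (X Y : Frol) (f : X -> Y) : coprodF (prodF IF X) Y -> coprodF (prodF IF X) Y -> Prop :=
  fun a b => exists x : X, a = inl (oneI, x) /\ b = inr (f x).

Definition cyl (X Y : Frol) (f : X -> Y) : Frol :=
  quotF (coprodF (prodF IF X) Y) (cyl_rel X Y f).

Definition cyl_pt (X Y : Frol) (f : X -> Y) (t : unit_int) (x : X) : cyl X Y f :=
  qproj (cyl_rel X Y f) (inl (t, x)).

Definition cyl_in (X Y : Frol) (f : X -> Y) (y : Y) : cyl X Y f :=
  qproj (cyl_rel X Y f) (inr y).

Record PFrol := MkPFrol { pfr :> Frol; bp : pfr }.

Definition cone_set (X : PFrol) (Y : Frol) (f : X -> Y) (z : cyl X Y f) : Prop :=
  exists (t : unit_int) (x : X), z = cyl_pt X Y f t x /\ (proj1_sig t = 0 \/ x = bp X).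

Definition cone_rel (X : PFrol) (Y : Frol) (f : X -> Y) : cyl X Y f -> cyl X Y f -> Prop :=
  fun a b => cone_set X Y f a /\ cone_set X Y f b.

Definition coneF (X : PFrol) (Y : Frol) (f : X -> Y) : Frol :=
  quotF (cyl X Y f) (cone_rel X Y f).

Definition cone (X : PFrol) (Y : Frol) (f : X -> Y) : PFrol :=
  MkPFrol (coneF X Y f) (qproj (cone_rel X Y f) (cyl_pt X Y f zeroI (bp X))).

Definition cone_incl (X : PFrol) (Y : Frol) (f : X -> Y) (y : Y) : cone X Y f :=
  qproj (cone_rel X Y f) (cyl_in X Y f y).

Definition psmooth (X W : PFrol) (g : X -> W) : Prop :=
  smooth X W g /\ g (bp X) = bp W.

Definition phomotopic (X W : PFrol) (g h : X -> W) : Prop :=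
  exists H : prodF Iunit X -> W,
    smooth (prodF Iunit X) W H /\
    (forall x, H (zeroI, x) = g x) /\
    (forall x, H (oneI, x) = h x) /\
    (forall t, H (t, bp X) = bp W).

Definition hrel (X W : PFrol) : (X -> W) -> (X -> W) -> Prop :=
  clos_refl_sym_trans (X -> W) (phomotopic X W).

(** Right exactness, unfolded on representatives:
    im (b-star) = preimage under (a-star) of the constant class in [V,W], for every pointed W. *)
Definition right_exact (U V Z : PFrol) (a : U -> V) (b : V -> Z) : Prop :=
  forall (W : PFrol) (g : V -> W), psmooth V W g ->
    (hrel U W (fun u => g (a u)) (fun _ => bp W) <->
     exists h : Z -> W, psmooth Z W h /\ hrel V W g (fun v => h (b v))).

Record Stage := MkStage { sdom : PFrol; scod : PFrol; smap : sdom -> scod }.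

Fixpoint stage (A X : PFrol) (i : A -> X) (n : nat) : Stage :=
  match n with
  | O => MkStage A X i
  | S m => let s := stage A X i m in
           MkStage (scod s) (cone (sdom s) (scod s) (smap s))
                   (cone_incl (sdom s) (scod s) (smap s))
  end.

From Stdlib Require Import Reals Relations Lra Lia.
From Stdlib Require Import ClassicalEpsilon FunctionalExtensionality PropExtensionality.
Open Scope R_scope.

(** The sequence A -> X -> T_i -> T_{i^1} -> ... consists of consecutive pairs
    [U --a--> V --incl--> T_a]; every inclusion [incl] is again pointed
    smooth, so it suffices to prove, for every pointed smooth [a], that
    [U -> V -> T_a] is right exact.
    - If [h : T_a -> W] is pointed smooth, then (t,u) |-> h [t,u] contracts
      [h o incl o a] to the constant map, so [a^*] kills the image of [incl^*].
    - Conversely, a null-homotopy [L] of [g o a] (obtained from the homotopy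
      relation via symmetry and transitivity of pointed homotopy) defines a
      map on the cylinder, [t,u] |-> L (psi t, u), [y] |-> g y, which is
      constant on the collapsed set and hence descends to [T_a].  The smooth
      step [psi] (0 below 1/4, 1 above 3/4) makes it smooth for the flattened
      structure of bold I; it is also what makes concatenation of homotopies
      smooth. *)

(** ** C^n functions on R *)

Fixpoint Cn (n : nat) (f : R -> R) : Prop :=
  match n with
  | O => True
  | S m => exists f', (forall x, derivable_pt_lim f x (f' x)) /\ Cn m f'
  end.

Lemma Cn_ext n f g : (forall x, f x = g x) -> Cn n f -> Cn n g.
Proof.
  intros H; replace g with f; auto. apply functional_extensionality; auto.
Qed.

Lemma Cn_le n : forall f, Cn (S n) f -> Cn n f.
Proof.
  induction n; intros f H; simpl; auto.
  destruct H as [f' [H1 H2]]. exists f'; split; auto.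
Qed.

Lemma Cn_const n c : Cn n (fun _ => c).
Proof.
  revert c; induction n; intro c; simpl; auto. exists (fun _ => 0); split; auto.
  intro x; apply (derivable_pt_lim_const c x).
Qed.

Lemma Cn_id n : Cn n (fun x => x).
Proof.
  destruct n; simpl; auto. exists (fun _ => 1); split.
  - intro x; apply derivable_pt_lim_id.
  - apply Cn_const.
Qed.

Lemma Cn_plus n : forall f g, Cn n f -> Cn n g -> Cn n (fun x => f x + g x).
Proof.
  induction n; intros f g Hf Hg; simpl; auto.
  destruct Hf as [f' [Hf1 Hf2]]; destruct Hg as [g' [Hg1 Hg2]].
  exists (fun x => f' x + g' x); split; auto.
  intro x; apply (derivable_pt_lim_plus f g x); auto.
Qed.

Lemma Cn_mult n : forall f g, Cn n f -> Cn n g -> Cn n (fun x => f x * g x).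
Proof.
  induction n; intros f g Hf Hg; simpl; auto.
  pose proof (Cn_le _ _ Hf) as Hf0. pose proof (Cn_le _ _ Hg) as Hg0.
  destruct Hf as [f' [Hf1 Hf2]]; destruct Hg as [g' [Hg1 Hg2]].
  exists (fun x => f' x * g x + f x * g' x); split.
  - intro x; apply (derivable_pt_lim_mult f g x); auto.
  - apply Cn_plus; apply IHn; auto.
Qed.

Lemma Cn_scal n c f : Cn n f -> Cn n (fun x => c * f x).
Proof. intro; apply Cn_mult; auto; apply Cn_const. Qed.

Lemma derivable_pt_lim_inv f x l : derivable_pt_lim f x l -> f x <> 0 ->
  derivable_pt_lim (fun y => / f y) x (- l / (f x)^2).
Proof.
  intros H Hf.
  assert (pr : derivable_pt f x) by (exists l; exact H).
  apply (derive_pt_eq_1 _ _ _ (derivable_pt_inv f x Hf pr)).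
  rewrite derive_pt_inv, (derive_pt_eq_0 _ _ _ pr H).
  unfold Rsqr; simpl; field; auto.
Qed.

Lemma Cn_inv n : forall f, (forall x, f x <> 0) -> Cn n f -> Cn n (fun x => / f x).
Proof.
  induction n; intros f Hnz Hf; simpl; auto.
  pose proof (Cn_le _ _ Hf) as Hf0.
  destruct Hf as [f' [Hf1 Hf2]].
  exists (fun x => - f' x * ((/ f x) * (/ f x))); split.
  - intro x. replace (- f' x * (/ f x * / f x)) with (- f' x / (f x)^2).
    + apply derivable_pt_lim_inv; auto.
    + simpl; field; auto.
  - apply Cn_mult.
    + apply (Cn_ext n (fun x => -1 * f' x)); [intro; ring | apply Cn_scal; auto].
    + apply Cn_mult; apply IHn; auto.
Qed.

Lemma Cn_comp n : forall f c, Cn n f -> Cn n c -> Cn n (fun x => f (c x)).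
Proof.
  induction n; intros f c Hf Hc; simpl; auto.
  pose proof (Cn_le _ _ Hc) as Hc0.
  destruct Hf as [f' [Hf1 Hf2]]; destruct Hc as [c' [Hc1 Hc2]].
  exists (fun x => f' (c x) * c' x); split.
  - intro x. apply (derivable_pt_lim_comp c f x); auto.
  - apply Cn_mult; auto.
Qed.

Lemma smoothR_Cn f : smoothR f -> forall n, Cn n f.
Proof.
  intros [D [H0 H1]].
  assert (HD : forall n m, Cn n (D m)).
  { induction n; intro m; simpl; auto. exists (D (S m)); split; auto. }
  intro n; apply (Cn_ext n (D O)); auto.
Qed.

Lemma Cn_all_derive g : (forall n, Cn n g) ->
  {g' | (forall x, derivable_pt_lim g x (g' x)) /\ forall n, Cn n g'}.
Proof.
  intro H. apply constructive_indefinite_description.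
  destruct (H 1%nat) as [g0 [Hg0 _]].
  exists g0; split; auto.
  intro n. destruct (H (S n)) as [g1 [Hg1 Hg2]].
  apply (Cn_ext n g1); auto.
  intro x; apply (uniqueness_limite g x); auto.
Qed.

Fixpoint derivatives (f : R -> R) (Hf : forall n, Cn n f) (n : nat) :
  {g | forall m, Cn m g} :=
  match n with
  | O => exist _ f Hf
  | S k => let s := derivatives f Hf k in
           exist _ (proj1_sig (Cn_all_derive (proj1_sig s) (proj2_sig s)))
                   (proj2 (proj2_sig (Cn_all_derive (proj1_sig s) (proj2_sig s))))
  end.

Lemma Cn_smoothR f : (forall n, Cn n f) -> smoothR f.
Proof.
  intro Hf. exists (fun n => proj1_sig (derivatives f Hf n)). split.
  - intro x; reflexivity.
  - intros n x. simpl. apply (proj1 (proj2_sig (Cn_all_derive _ _))).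
Qed.

Lemma smoothR_ext f g : (forall x, f x = g x) -> smoothR f -> smoothR g.
Proof. intros H; replace g with f; auto. apply functional_extensionality; auto. Qed.

Lemma smoothR_const c : smoothR (fun _ => c).
Proof. apply Cn_smoothR; intro; apply Cn_const. Qed.

Lemma smoothR_id : smoothR (fun x => x).
Proof. apply Cn_smoothR; intro; apply Cn_id. Qed.

Lemma smoothR_plus f g : smoothR f -> smoothR g -> smoothR (fun x => f x + g x).
Proof. intros; apply Cn_smoothR; intro; apply Cn_plus; apply smoothR_Cn; auto. Qed.

Lemma smoothR_mult f g : smoothR f -> smoothR g -> smoothR (fun x => f x * g x).
Proof. intros; apply Cn_smoothR; intro; apply Cn_mult; apply smoothR_Cn; auto. Qed.

Lemma smoothR_inv f : (forall x, f x <> 0) -> smoothR f -> smoothR (fun x => / f x).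
Proof. intros; apply Cn_smoothR; intro; apply Cn_inv; auto; apply smoothR_Cn; auto. Qed.

Lemma smoothR_comp f c : smoothR f -> smoothR c -> smoothR (fun x => f (c x)).
Proof. intros; apply Cn_smoothR; intro; apply Cn_comp; apply smoothR_Cn; auto. Qed.

Lemma smoothR_affine a b g : smoothR g -> smoothR (fun x => a * g x + b).
Proof.
  intro Hg. apply smoothR_plus; [apply smoothR_mult; [apply smoothR_const | exact Hg]
                                | apply smoothR_const].
Qed.

Lemma derivable_pt_lim_local F G x y d l : 0 < d -> Rabs (y - x) < d ->
  (forall z, Rabs (z - x) < d -> F z = G z) ->
  derivable_pt_lim G y l -> derivable_pt_lim F y l.
Proof.
  intros Hd Hy Heq HG eps Heps.
  destruct (HG eps Heps) as [del Hdel].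
  assert (Hp : 0 < Rmin del (d - Rabs (y - x))).
  { apply Rmin_pos; [apply cond_pos | lra]. }
  exists (mkposreal _ Hp). intros h Hh0 Hh. simpl in Hh.
  assert (Hh' : Rabs h < d - Rabs (y - x)) by (eapply Rlt_le_trans; [exact Hh | apply Rmin_r]).
  rewrite (Heq (y + h)), (Heq y).
  - apply Hdel; auto. eapply Rlt_le_trans; [exact Hh | apply Rmin_l].
  - unfold Rminus in *; lra.
  - replace (y + h - x) with ((y - x) + h) by ring.
    apply Rle_lt_trans with (1 := Rabs_triang _ _). lra.
Qed.

Definition locally_Cn n F := forall x, exists d, 0 < d /\ exists G, Cn n G /\
   forall z, Rabs (z - x) < d -> F z = G z.

Lemma locally_Cn_Cn n : forall F, locally_Cn n F -> Cn n F.
Proof.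
  induction n; intros F H; simpl; auto.
  assert (Hex : forall x, exists l, derivable_pt_lim F x l).
  { intro x. destruct (H x) as [d [Hd [G [[G' [HG1 HG2]] HG]]]].
    exists (G' x). apply (derivable_pt_lim_local F G x x d); auto.
    replace (x - x) with 0 by ring; rewrite Rabs_R0; auto. }
  exists (fun x => proj1_sig (constructive_indefinite_description _ (Hex x))).
  split.
  - intro x; apply (proj2_sig (constructive_indefinite_description _ (Hex x))).
  - apply IHn. intro x.
    destruct (H x) as [d [Hd [G [[G' [HG1 HG2]] HG]]]].
    exists d; split; auto. exists G'; split; auto.
    intros z Hz. apply (uniqueness_limite F z).
    + apply (proj2_sig (constructive_indefinite_description _ (Hex z))).
    + apply (derivable_pt_lim_local F G x z d); auto.
Qed.

Lemma smoothR_local F :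
  (forall x, exists d, 0 < d /\ exists G, smoothR G /\
     forall z, Rabs (z - x) < d -> F z = G z) ->
  smoothR F.
Proof.
  intro H. apply Cn_smoothR. intro n. apply locally_Cn_Cn. intro x.
  destruct (H x) as [d [Hd [G [HG1 HG2]]]]. exists d; split; auto.
  exists G; split; auto. apply smoothR_Cn; auto.
Qed.

Lemma smoothR_cont f x : smoothR f -> forall eps, 0 < eps -> exists d, 0 < d /\
  forall z, Rabs (z - x) < d -> Rabs (f z - f x) < eps.
Proof.
  intros [D [H0 H1]] eps Heps.
  assert (Hc : continuity_pt f x).
  { apply derivable_continuous_pt. exists (D 1%nat x).
    apply (derivable_pt_lim_ext (D O)); auto. }
  destruct (Hc eps Heps) as [d [Hd Hd2]].
  exists d; split; auto. intros z Hz.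
  destruct (Req_dec z x) as [->|Hne].
  - replace (f x - f x) with 0 by ring; rewrite Rabs_R0; auto.
  - apply (Hd2 z). split; [split; [exact I | auto] | exact Hz].
Qed.

(** ** A smooth step function *)

(** [flat k x = x^-k exp(-1/x)] for [x > 0] and [0] otherwise; the family is
    closed under differentiation, which gives smoothness at [0]. *)
Definition flat (k : nat) (x : R) : R :=
  if Rlt_dec 0 x then / x ^ k * exp (- / x) else 0.

Lemma exp_pow_INR n z : exp (INR n * z) = exp z ^ n.
Proof.
  induction n.
  - simpl. rewrite Rmult_0_l, exp_0; auto.
  - rewrite S_INR. replace ((INR n + 1) * z) with (INR n * z + z) by ring.
    rewrite exp_plus, IHn. simpl; ring.
Qed.

(** The difference quotient of [flat k] at [0] is O(h), from
    [exp y >= y^N / N^N] applied at [y = 1/h]. *)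
Lemma flat_quotient_bound k h : 0 < h ->
  / h ^ (S k) * exp (- / h) <= INR (S (S k)) ^ (S (S k)) * h.
Proof.
  intro Hh. set (N := S (S k)).
  assert (HN : 0 < INR N) by (apply lt_0_INR; unfold N; lia).
  set (y := / h / INR N).
  assert (Hy : 0 < y) by (unfold y; apply Rdiv_lt_0_compat; auto; apply Rinv_0_lt_compat; auto).
  assert (Hpow : y ^ N <= exp (/ h)).
  { replace (/ h) with (INR N * y) by (unfold y; field; lra).
    rewrite exp_pow_INR. apply pow_incr. split; [lra|].
    pose proof (exp_ineq1_le y); lra. }
  assert (Hexp : exp (- / h) <= (h * INR N) ^ N).
  { rewrite exp_Ropp.
    replace ((h * INR N) ^ N) with (/ (y ^ N)).
    - apply Rinv_le_contravar; auto. apply pow_lt; auto.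
    - unfold y. rewrite <- pow_inv. f_equal. field; lra. }
  apply Rle_trans with (/ h ^ S k * (h * INR N) ^ N).
  - apply Rmult_le_compat_l; auto. left; apply Rinv_0_lt_compat, pow_lt; auto.
  - right. rewrite Rpow_mult_distr. unfold N. cbn [pow].
    assert (h ^ k <> 0) by (apply pow_nonzero; lra). field. split; lra.
Qed.

Definition flat_deriv (k : nat) (x : R) : R := flat (S (S k)) x - INR k * flat (S k) x.

Lemma flat_deriv_pos k x : 0 < x -> derivable_pt_lim (flat k) x (flat_deriv k x).
Proof.
  intro Hx.
  apply (derivable_pt_lim_local (flat k) (fun y => / y ^ k * exp (- / y)) x x x); auto.
  - replace (x - x) with 0 by ring; rewrite Rabs_R0; auto.
  - intros z Hz. unfold flat. destruct (Rlt_dec 0 z); auto.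
    exfalso. apply Rabs_def2 in Hz. lra.
  - assert (Hk : x ^ k <> 0) by (apply pow_nonzero; lra).
    assert (Dpow := derivable_pt_lim_inv (fun y => y ^ k) x _ (derivable_pt_lim_pow x k) Hk).
    assert (Drec := derivable_pt_lim_inv (fun y => y) x _ (derivable_pt_lim_id x) ltac:(lra)).
    assert (Dexp := derivable_pt_lim_comp _ exp x _ _ (derivable_pt_lim_opp _ _ _ Drec)
                      (derivable_pt_lim_exp _)).
    assert (D := derivable_pt_lim_ext _ (fun y => / y ^ k * exp (- / y)) x _ (fun z => eq_refl)
                   (derivable_pt_lim_mult _ _ x _ _ Dpow Dexp)).
    unfold flat_deriv, flat. destruct (Rlt_dec 0 x); [|lra].
    match goal with |- derivable_pt_lim _ _ ?l =>
      match type of D with derivable_pt_lim _ _ ?l' => replace l with l'; [exact D|] end end.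
    unfold comp, opp_fct; cbv beta.
    destruct k.
    + simpl. field. lra.
    + cbn [pow Nat.pred]. assert (x ^ k <> 0) by (apply pow_nonzero; lra).
      field. split; lra.
Qed.

Lemma flat_deriv_zero k : derivable_pt_lim (flat k) 0 (flat_deriv k 0).
Proof.
  unfold flat_deriv, flat at 2 3. destruct (Rlt_dec 0 0); [lra|].
  replace (0 - INR k * 0) with 0 by ring.
  intros eps Heps.
  set (C := INR (S (S k)) ^ (S (S k))).
  assert (HC : 0 < C) by (apply pow_lt, lt_0_INR; lia).
  assert (Hd : 0 < eps / C) by (apply Rdiv_lt_0_compat; auto).
  exists (mkposreal _ Hd). intros h Hh0 Hh. simpl in Hh.
  rewrite Rplus_0_l. unfold flat. destruct (Rlt_dec 0 0); [lra|].
  destruct (Rlt_dec 0 h) as [Hp|Hn].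
  - rewrite Rabs_pos_eq in Hh by lra.
    replace ((/ h ^ k * exp (- / h) - 0) / h - 0) with (/ h ^ S k * exp (- / h)).
    + rewrite Rabs_pos_eq.
      * apply Rle_lt_trans with (1 := flat_quotient_bound k h Hp). fold C.
        apply Rmult_lt_reg_r with (/ C). apply Rinv_0_lt_compat; auto.
        replace (C * h * / C) with h by (field; lra). exact Hh.
      * left. apply Rmult_lt_0_compat; [apply Rinv_0_lt_compat, pow_lt; auto | apply exp_pos].
    + assert (h ^ k <> 0) by (apply pow_nonzero; lra). cbn [pow]. field. split; lra.
  - replace ((0 - 0) / h - 0) with 0 by (field; auto). rewrite Rabs_R0; auto.
Qed.

Lemma flat_deriv_neg k x : x < 0 -> derivable_pt_lim (flat k) x (flat_deriv k x).
Proof.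
  intro Hx.
  apply (derivable_pt_lim_local (flat k) (fun _ => 0) x x (- x)); try lra.
  - replace (x - x) with 0 by ring; rewrite Rabs_R0; lra.
  - intros z Hz. unfold flat. destruct (Rlt_dec 0 z); auto.
    exfalso. apply Rabs_def2 in Hz. lra.
  - unfold flat_deriv, flat. destruct (Rlt_dec 0 x); [lra|].
    replace (0 - INR k * 0) with 0 by ring. apply (derivable_pt_lim_const 0 x).
Qed.

Lemma flat_derivable k x : derivable_pt_lim (flat k) x (flat_deriv k x).
Proof.
  destruct (Rtotal_order x 0) as [Hx|[->|Hx]].
  - apply flat_deriv_neg; auto.
  - apply flat_deriv_zero.
  - apply flat_deriv_pos; auto.
Qed.

Lemma Cn_flat n : forall k, Cn n (flat k).
Proof.
  induction n; intro k; simpl; auto.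
  exists (flat_deriv k); split; [apply flat_derivable|].
  apply (Cn_ext n (fun x => flat (S (S k)) x + (- INR k) * flat (S k) x)).
  - intro; unfold flat_deriv; ring.
  - apply Cn_plus; auto. apply Cn_scal; auto.
Qed.

Definition bump (x : R) := flat 0 x.

Lemma bump_smooth : smoothR bump.
Proof. apply Cn_smoothR; intro; apply Cn_flat. Qed.

Lemma bump_nonpos x : x <= 0 -> bump x = 0.
Proof. intro; unfold bump, flat; destruct (Rlt_dec 0 x); auto; lra. Qed.

Lemma bump_pos x : 0 < x -> 0 < bump x.
Proof.
  intro; unfold bump, flat; destruct (Rlt_dec 0 x); [|lra]. simpl.
  rewrite Rinv_1, Rmult_1_l. apply exp_pos.
Qed.

Lemma bump_nonneg x : 0 <= bump x.
Proof.
  destruct (Rlt_le_dec 0 x); [left; apply bump_pos | right; rewrite bump_nonpos]; auto.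
Qed.

Definition psi (x : R) := bump (x - 1/4) * / (bump (x - 1/4) + bump (3/4 - x)).

Lemma psi_denominator_pos x : 0 < bump (x - 1/4) + bump (3/4 - x).
Proof.
  destruct (Rlt_le_dec (1/4) x).
  - pose proof (bump_pos (x - 1/4)); pose proof (bump_nonneg (3/4 - x)); lra.
  - pose proof (bump_pos (3/4 - x)); pose proof (bump_nonneg (x - 1/4)); lra.
Qed.

Lemma psi_smooth : smoothR psi.
Proof.
  assert (Hshift : forall a b, smoothR (fun x => bump (a * x + b))).
  { intros a b. apply (smoothR_comp bump); [apply bump_smooth|].
    apply (smoothR_affine a b (fun x => x)), smoothR_id. }
  assert (H1 : smoothR (fun x => bump (x - 1/4))).
  { apply (smoothR_ext (fun x => bump (1 * x + - (1/4)))); [intro; f_equal; ring | auto]. }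
  assert (H2 : smoothR (fun x => bump (3/4 - x))).
  { apply (smoothR_ext (fun x => bump (-1 * x + 3/4))); [intro; f_equal; ring | auto]. }
  unfold psi. apply smoothR_mult; auto.
  apply smoothR_inv; [intro x; pose proof (psi_denominator_pos x); lra|].
  apply smoothR_plus; auto.
Qed.

Lemma psi_bounds x : 0 <= psi x <= 1.
Proof.
  unfold psi. pose proof (psi_denominator_pos x). pose proof (bump_nonneg (x - 1/4)).
  pose proof (bump_nonneg (3/4 - x)). split.
  - apply Rmult_le_pos; auto. left; apply Rinv_0_lt_compat; auto.
  - apply Rmult_le_reg_r with (bump (x - 1/4) + bump (3/4 - x)); auto.
    rewrite Rmult_assoc, Rinv_l by lra. lra.
Qed.

Lemma psi_low x : x <= 1/4 -> psi x = 0.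
Proof. intro; unfold psi; rewrite bump_nonpos by lra; ring. Qed.

Lemma psi_high x : 3/4 <= x -> psi x = 1.
Proof.
  intro; unfold psi; rewrite (bump_nonpos (3/4 - x)) by lra.
  pose proof (bump_pos (x - 1/4)). field. lra.
Qed.

Lemma smooth_curves (X Y : Frol) (phi : X -> Y) :
  smooth X Y phi <-> forall c, curves X c -> curves Y (fun t => phi (c t)).
Proof.
  split.
  - intros H c Hc. apply curves_spec. intros f Hf.
    apply (proj1 (funs_spec X _) (H f Hf) c Hc).
  - intros H g Hg. apply funs_spec. intros c Hc.
    apply (proj1 (curves_spec Y _) (H c Hc) g Hg).
Qed.

Lemma curve_fun (W : Frol) (c : R -> W) f :
  curves W c -> funs W f -> smoothR (fun t => f (c t)).
Proof. intros H1 H2. apply (proj1 (curves_spec W c) H1 f H2). Qed.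

Lemma const_curve (W : Frol) (w : W) : curves W (fun _ => w).
Proof. apply curves_spec. intros f _. apply smoothR_const. Qed.

Lemma curves_gen_curves T C0 c : C0 c -> curves (gen_curves T C0) c.
Proof. intros H; cbn; intros f Hf; apply Hf; auto. Qed.

Lemma smooth_gen_curves T C0 (Y : Frol) (phi : T -> Y) :
  (forall c, C0 c -> curves Y (fun t => phi (c t))) -> smooth (gen_curves T C0) Y phi.
Proof.
  intros H g Hg. cbn. intros c Hc.
  apply (proj1 (curves_spec Y _) (H c Hc) g Hg).
Qed.

Lemma curves_Iunit (c : R -> Iunit) : curves Iunit c <-> smoothR (fun t => proj1_sig (c t)).
Proof.
  split.
  - intro H. apply (H (fun p => proj1_sig p)).
    exists (fun x => x). split; auto.
    cbn. intros c' Hc'. apply (Hc' (fun x => x)). reflexivity.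
  - intros H h [g [Hg ->]]. cbn in Hg. apply Hg.
    intros g' ->. exact H.
Qed.

(** Bold I has fewer functions, hence more curves, than [I]. *)
Lemma curves_IF (c : R -> Iunit) : curves Iunit c -> curves IF c.
Proof.
  intros H. cbn. intros g [Hg _].
  apply (proj1 (funs_spec Iunit g) Hg c H).
Qed.

(** Since [psi] is constant near both ends of [[0,1]], [psi] is a smooth
    function on bold I. *)
Lemma curves_IF_psi (c : R -> IF) : curves IF c -> smoothR (fun t => psi (proj1_sig (c t))).
Proof.
  intro Hc. apply (Hc (fun s : unit_int => psi (proj1_sig s))). split.
  - apply funs_spec. intros c' Hc'.
    apply (smoothR_comp psi (fun t => proj1_sig (c' t))); [apply psi_smooth|].
    exact (proj1 (curves_Iunit c') Hc').
  - exists (1/8). split; [lra|split].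
    + intros s t Hs Ht. rewrite !psi_low; lra.
    + intros s t Hs Ht. rewrite !psi_high; lra.
Qed.

Lemma curves_prod (X Y : Frol) (c : R -> prodF X Y) :
  curves (prodF X Y) c <-> curves X (fun t => fst (c t)) /\ curves Y (fun t => snd (c t)).
Proof.
  split.
  - intros H. split; apply curves_spec; intros f Hf.
    + apply (H (fun p => f (fst p))). left; eauto.
    + apply (H (fun p => f (snd p))). right; eauto.
  - intros [H1 H2] h [[f [Hf ->]]|[f [Hf ->]]].
    + apply (proj1 (curves_spec X _) H1 f Hf).
    + apply (proj1 (curves_spec Y _) H2 f Hf).
Qed.

Lemma curves_prod_Iunit (X : Frol) (c : R -> prodF Iunit X) :
  curves (prodF Iunit X) c <->
  smoothR (fun t => proj1_sig (fst (c t))) /\ curves X (fun t => snd (c t)).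
Proof.
  rewrite curves_prod, curves_Iunit. tauto.
Qed.

Lemma curve_through_prod (X W : Frol) (H : prodF Iunit X -> W) (g : R -> unit_int) (m : R -> X) :
  smooth (prodF Iunit X) W H ->
  smoothR (fun t => proj1_sig (g t)) -> curves X m ->
  curves W (fun t => H (g t, m t)).
Proof.
  intros HH H1 H2. apply (proj1 (smooth_curves _ _ H) HH (fun t => (g t, m t))).
  apply curves_prod_Iunit. auto.
Qed.

Lemma sig_eq (A : Type) (P : A -> Prop) x y px py : x = y -> exist P x px = exist P y py.
Proof. intros ->. f_equal. apply proof_irrelevance. Qed.

Lemma clos_respects {T Z : Type} (Rel : T -> T -> Prop) (F : T -> Z) :
  (forall a b, Rel a b -> F a = F b) ->
  forall a b, clos_refl_sym_trans T Rel a b -> F a = F b.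
Proof. intros HF a b H; induction H; eauto; congruence. Qed.

Definition qlift {T Z : Type} (Rel : T -> T -> Prop) (F : T -> Z) (q : qcar T Rel) : Z :=
  F (proj1_sig (constructive_indefinite_description _ (proj2_sig q))).

Lemma qlift_proj {T Z : Type} (Rel : T -> T -> Prop) (F : T -> Z) :
  (forall a b, Rel a b -> F a = F b) -> forall a, qlift Rel F (qproj Rel a) = F a.
Proof.
  intros HF a. unfold qlift.
  destruct (constructive_indefinite_description _ _) as [t Ht]. simpl in *.
  symmetry. apply (clos_respects Rel F HF). rewrite Ht. apply rst_refl.
Qed.

Lemma qproj_eq {T : Type} (Rel : T -> T -> Prop) a b :
  clos_refl_sym_trans T Rel a b -> qproj Rel a = qproj Rel b.
Proof.
  intro H. unfold qproj. apply sig_eq.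
  apply functional_extensionality; intro x; apply propositional_extensionality; split; intro.
  - apply rst_trans with a; auto. apply rst_sym; auto.
  - apply rst_trans with b; auto.
Qed.

Lemma qproj_curve (X : Frol) (Rel : X -> X -> Prop) (c : R -> X) :
  curves X c -> curves (quotF X Rel) (fun t => qproj Rel (c t)).
Proof. intro Hc. apply curves_gen_curves. eauto. Qed.

Lemma qlift_smooth (X W : Frol) (Rel : X -> X -> Prop) (F : X -> W) :
  smooth X W F -> (forall a b, Rel a b -> F a = F b) ->
  smooth (quotF X Rel) W (qlift Rel F).
Proof.
  intros HF HRel. apply smooth_gen_curves. intros c [c0 [Hc0 ->]].
  replace (fun t => qlift Rel F (qproj Rel (c0 t))) with (fun t => F (c0 t)).
  - exact (proj1 (smooth_curves _ _ F) HF c0 Hc0).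
  - apply functional_extensionality; intro; symmetry; apply qlift_proj; auto.
Qed.

Lemma unit_int_eq (s t : unit_int) : proj1_sig s = proj1_sig t -> s = t.
Proof. destruct s, t; simpl; intros; apply sig_eq; auto. Qed.

Definition psiI (x : R) : unit_int := exist _ (psi x) (psi_bounds x).

Lemma psiI_low x : x <= 1/4 -> psiI x = zeroI.
Proof. intro; apply unit_int_eq; simpl; apply psi_low; auto. Qed.

Lemma psiI_high x : 3/4 <= x -> psiI x = oneI.
Proof. intro; apply unit_int_eq; simpl; apply psi_high; auto. Qed.

Lemma psiI_affine_smooth (a b : R) (g : R -> R) :
  smoothR g -> smoothR (fun t => proj1_sig (psiI (a * g t + b))).
Proof.
  intro Hg. apply (smoothR_comp psi (fun t => a * g t + b)); [apply psi_smooth|].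
  apply smoothR_affine; auto.
Qed.

Lemma reversal_bounds (t : unit_int) : 0 <= 1 - proj1_sig t <= 1.
Proof. destruct t as [x Hx]; simpl; lra. Qed.

Definition revI (t : unit_int) : unit_int := exist _ (1 - proj1_sig t) (reversal_bounds t).

(** ** Pointed smooth homotopy *)

Lemma const_psmooth (U W : PFrol) : psmooth U W (fun _ => bp W).
Proof.
  split; [|reflexivity].
  apply smooth_curves; intros; apply const_curve.
Qed.

Lemma phom_refl (U W : PFrol) (f : U -> W) : psmooth U W f -> phomotopic U W f f.
Proof.
  intros [Hf Hb]. exists (fun p => f (snd p)). repeat split; auto.
  apply smooth_curves; intros c Hc.
  apply (proj1 (smooth_curves _ _ f) Hf). exact (proj2 (proj1 (curves_prod_Iunit _ c) Hc)).
Qed.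

Lemma phom_sym (U W : PFrol) f g : phomotopic U W f g -> phomotopic U W g f.
Proof.
  intros [H [Hs [H0 [H1 Hb]]]].
  exists (fun p => H (revI (fst p), snd p)). split; [|split; [|split]].
  - apply smooth_curves. intros c Hc.
    destruct (proj1 (curves_prod_Iunit _ c) Hc) as [Hg Hm].
    apply curve_through_prod; auto.
    apply (smoothR_ext (fun t => -1 * proj1_sig (fst (c t)) + 1));
      [intro t; change (fcar Rline) with R; change (fcar Iunit) with unit_int; simpl; ring|].
    apply smoothR_affine; auto.
  - intro x. simpl. rewrite <- H1. f_equal. f_equal. apply unit_int_eq. simpl; ring.
  - intro x. simpl. rewrite <- H0. f_equal. f_equal. apply unit_int_eq. simpl; ring.
  - intro t; simpl; auto.
Qed.

(** Concatenation of two maps on [I x X]: [H1] runs on [[0,1/2]] and [H2] on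
    [[1/2,1]], both reparametrized by [psi] so that they are stationary near
    the junction. *)
Definition concat (X W : Frol) (H1 H2 : prodF Iunit X -> W) (p : unit_int * X) : W :=
  if Rle_dec (proj1_sig (fst p)) (1/2)
  then H1 (psiI (2 * proj1_sig (fst p) + 0), snd p)
  else H2 (psiI (2 * proj1_sig (fst p) + -1), snd p).

(** Smoothness is local; near [t = 1/2] both halves are the constant end of
    [H1] (equal to the start of [H2]), elsewhere one half applies. *)
Lemma concat_smooth (X W : Frol) (H1 H2 : prodF Iunit X -> W) :
  smooth (prodF Iunit X) W H1 -> smooth (prodF Iunit X) W H2 ->
  (forall x, H1 (oneI, x) = H2 (zeroI, x)) ->
  smooth (prodF Iunit X) W (concat X W H1 H2).
Proof.
  intros Hs1 Hs2 Hjoin. apply smooth_curves. intros c Hc.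
  destruct (proj1 (curves_prod_Iunit _ c) Hc) as [Hg Hm].
  pose (gm := fun t => @proj1_sig R (fun x => 0 <= x <= 1) (fst (c t))).
  assert (Hgm : smoothR gm) by exact Hg. clear Hg.
  apply curves_spec. intros F HF. apply smoothR_local. intro t0.
  destruct (total_order_T (gm t0) (1/2)) as [[Hlt|Heq]|Hgt].
  - destruct (smoothR_cont gm t0 Hgm (1/2 - gm t0)) as [d [Hd Hnear]]; [lra|].
    exists d; split; auto.
    exists (fun t => F (H1 (psiI (2 * gm t + 0), snd (c t)))). split.
    + apply curve_fun; auto. apply curve_through_prod; auto. apply psiI_affine_smooth; auto.
    + intros z Hz. specialize (Hnear z Hz). apply Rabs_def2 in Hnear.
      unfold concat. destruct (Rle_dec _ _) as [r|r]; [reflexivity|].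
      exfalso; apply r. change (gm z <= 1/2). lra.
  - destruct (smoothR_cont gm t0 Hgm (1/8)) as [d [Hd Hnear]]; [lra|].
    exists d; split; auto.
    exists (fun t => F (H1 (oneI, snd (c t)))). split.
    + apply curve_fun; auto. apply curve_through_prod; auto. apply smoothR_const.
    + intros z Hz. specialize (Hnear z Hz). apply Rabs_def2 in Hnear.
      unfold concat. destruct (Rle_dec _ _) as [r|r].
      * rewrite psiI_high; [reflexivity | change (3/4 <= 2 * gm z + 0); lra].
      * rewrite psiI_low, <- Hjoin; [reflexivity | change (2 * gm z + -1 <= 1/4); lra].
  - destruct (smoothR_cont gm t0 Hgm (gm t0 - 1/2)) as [d [Hd Hnear]]; [lra|].
    exists d; split; auto.
    exists (fun t => F (H2 (psiI (2 * gm t + -1), snd (c t)))). split.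
    + apply curve_fun; auto. apply curve_through_prod; auto. apply psiI_affine_smooth; auto.
    + intros z Hz. specialize (Hnear z Hz). apply Rabs_def2 in Hnear.
      unfold concat. destruct (Rle_dec _ _) as [r|r]; [|reflexivity].
      exfalso. change (gm z <= 1/2) in r. lra.
Qed.

Lemma phom_trans (U W : PFrol) f g h :
  phomotopic U W f g -> phomotopic U W g h -> phomotopic U W f h.
Proof.
  intros [H1 [Hs1 [H10 [H11 Hb1]]]] [H2 [Hs2 [H20 [H21 Hb2]]]].
  exists (concat U W H1 H2). split; [|split; [|split]].
  - apply concat_smooth; auto. intro x. rewrite H11, H20. reflexivity.
  - intro x. unfold concat. simpl. destruct (Rle_dec 0 (1/2)); [|lra].
    rewrite psiI_low by lra. auto.
  - intro x. unfold concat. simpl. destruct (Rle_dec 1 (1/2)); [lra|].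
    rewrite psiI_high by lra. auto.
  - intro t. unfold concat. destruct (Rle_dec _ _); auto.
Qed.

Lemma hrel_nullhomotopic (U W : PFrol) f g : hrel U W f g ->
  (phomotopic U W (fun _ => bp W) f <-> phomotopic U W (fun _ => bp W) g).
Proof.
  intro H. induction H as [f g Hfg| | |]; try tauto.
  split; intro Hnull; eapply phom_trans; eauto. apply phom_sym; auto.
Qed.

Lemma hrel_precomp (U V W : PFrol) (a : U -> V) (ha : psmooth U V a) g1 g2 :
  hrel V W g1 g2 -> hrel U W (fun u => g1 (a u)) (fun u => g2 (a u)).
Proof.
  intro H. induction H as [g1 g2 [L [Hs [H0 [H1 Hb]]]]| | |].
  - apply rst_step. exists (fun p => L (fst p, a (snd p))). split; [|split; [|split]].
    + apply smooth_curves; intros c Hc.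
      destruct (proj1 (curves_prod_Iunit _ c) Hc) as [Hg Hm].
      apply curve_through_prod; auto.
      exact (proj1 (smooth_curves _ _ a) (proj1 ha) _ Hm).
    + intro; simpl; auto.
    + intro; simpl; auto.
    + intro t; simpl. rewrite (proj2 ha). apply Hb.
  - apply rst_refl.
  - apply rst_sym; auto.
  - eapply rst_trans; eauto.
Qed.

(** ** Maps out of the flattened mapping cylinder *)

Lemma flatten_time_smooth (X W : Frol) (L : prodF Iunit X -> W) :
  smooth (prodF Iunit X) W L ->
  smooth (prodF IF X) W (fun p => L (psiI (proj1_sig (fst p)), snd p)).
Proof.
  intro HL. apply smooth_curves. intros c Hc.
  apply curves_prod in Hc. destruct Hc as [Ht Hx].
  apply curve_through_prod; auto. exact (curves_IF_psi _ Ht).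
Qed.

Definition cyl_map (X Y : Frol) (f : X -> Y) (W : Type)
  (K : unit_int * X -> W) (g : Y -> W) : cyl X Y f -> W :=
  qlift (cyl_rel X Y f) (fun z => match z with inl p => K p | inr y => g y end).

Section CylinderMap.
Variables (X Y W : Frol) (f : X -> Y) (K : prodF IF X -> W) (g : Y -> W).
Hypothesis glue : forall x, K (oneI, x) = g (f x).

Lemma cyl_map_respects (z z' : coprodF (prodF IF X) Y) :
  cyl_rel X Y f z z' ->
  (match z with inl p => K p | inr y => g y end) =
  (match z' with inl p => K p | inr y => g y end).
Proof. intros [x [-> ->]]. apply glue. Qed.

Lemma cyl_map_pt t x : cyl_map X Y f W K g (cyl_pt X Y f t x) = K (t, x).
Proof. exact (qlift_proj _ _ cyl_map_respects _). Qed.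

Lemma cyl_map_in y : cyl_map X Y f W K g (cyl_in X Y f y) = g y.
Proof. exact (qlift_proj _ _ cyl_map_respects _). Qed.

Lemma cyl_map_smooth :
  smooth (prodF IF X) W K -> smooth Y W g -> smooth (cyl X Y f) W (cyl_map X Y f W K g).
Proof.
  intros HK Hg. apply qlift_smooth; [|exact cyl_map_respects].
  apply smooth_gen_curves. intros c [[c1 [Hc1 ->]]|[c2 [Hc2 ->]]].
  - exact (proj1 (smooth_curves _ _ K) HK c1 Hc1).
  - exact (proj1 (smooth_curves _ _ g) Hg c2 Hc2).
Qed.

End CylinderMap.

Section ConePoints.
Variables (U : PFrol) (V : Frol) (a : U -> V).

Definition cone_pt (t : unit_int) (u : U) : cone U V a :=
  qproj (cone_rel U V a) (cyl_pt U V a t u).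

Lemma cone_pt_collapsed t u : proj1_sig t = 0 \/ u = bp U -> cone_pt t u = bp (cone U V a).
Proof.
  intro Hcol. apply qproj_eq, rst_step. split.
  - exists t, u; split; [reflexivity | exact Hcol].
  - exists zeroI, (bp U); split; [reflexivity | right; reflexivity].
Qed.

Lemma cone_pt_one u : cone_pt oneI u = cone_incl U V a (a u).
Proof.
  unfold cone_pt, cone_incl. f_equal. apply qproj_eq, rst_step. exists u; split; reflexivity.
Qed.

Lemma cone_pt_smooth : smooth (prodF Iunit U) (cone U V a) (fun p => cone_pt (fst p) (snd p)).
Proof.
  apply smooth_curves; intros c Hc.
  apply qproj_curve, qproj_curve, curves_gen_curves. left.
  exists (fun t => (fst (c t), snd (c t))). split; [|reflexivity].
  apply curves_prod in Hc. destruct Hc as [Ht Hu].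
  apply curves_prod. split; auto. apply curves_IF. exact Ht.
Qed.

Lemma cone_incl_smooth : smooth V (cone U V a) (cone_incl U V a).
Proof.
  apply smooth_curves; intros c Hc.
  apply qproj_curve, qproj_curve, curves_gen_curves. right. eauto.
Qed.

End ConePoints.

Lemma cone_incl_psmooth (U V : PFrol) (a : U -> V) :
  a (bp U) = bp V -> psmooth V (cone U V a) (cone_incl U V a).
Proof.
  intro Ha. split; [apply cone_incl_smooth|].
  rewrite <- Ha, <- (cone_pt_one U V a). apply cone_pt_collapsed. right; reflexivity.
Qed.

Lemma cone_incl_after_nullhomotopic (U V W : PFrol) (a : U -> V) (h : cone U V a -> W) :
  psmooth (cone U V a) W h ->
  phomotopic U W (fun _ => bp W) (fun u => h (cone_incl U V a (a u))).
Proof.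
  intros [Hh Hb].
  exists (fun p => h (cone_pt U V a (fst p) (snd p))). split; [|split; [|split]].
  - apply smooth_curves; intros c Hc.
    exact (proj1 (smooth_curves _ _ h) Hh _
             (proj1 (smooth_curves _ _ _) (cone_pt_smooth U V a) c Hc)).
  - intro u. simpl. rewrite cone_pt_collapsed; auto.
  - intro u. simpl. rewrite cone_pt_one; reflexivity.
  - intro t. simpl. rewrite cone_pt_collapsed; auto.
Qed.

Lemma cone_extension (U V W : PFrol) (a : U -> V) (g : V -> W) (L : prodF Iunit U -> W) :
  psmooth V W g -> smooth (prodF Iunit U) W L ->
  (forall u, L (zeroI, u) = bp W) -> (forall u, L (oneI, u) = g (a u)) ->
  (forall t, L (t, bp U) = bp W) ->
  exists h : cone U V a -> W, psmooth (cone U V a) W h /\ forall v, h (cone_incl U V a v) = g v.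
Proof.
  intros [Hg _] HL HL0 HL1 HLb.
  pose (K := fun p : unit_int * U => L (psiI (proj1_sig (fst p)), snd p)).
  assert (Hglue : forall u, K (oneI, u) = g (a u)).
  { intro u. unfold K; simpl. rewrite psiI_high by lra. apply HL1. }
  pose (k := cyl_map U V a W K g).
  assert (Hcollapse : forall z, cone_set U V a z -> k z = bp W).
  { intros z [t [u [-> [Ht|Hu]]]]; unfold k; rewrite cyl_map_pt by exact Hglue;
      unfold K; simpl.
    - rewrite psiI_low by lra. apply HL0.
    - subst u. apply HLb. }
  assert (Hresp : forall z z', cone_rel U V a z z' -> k z = k z').
  { intros z z' [Hz Hz']. rewrite (Hcollapse z Hz), (Hcollapse z' Hz'). reflexivity. }
  exists (qlift (cone_rel U V a) k). split; [split|].
  - apply qlift_smooth; auto.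
    apply cyl_map_smooth; auto. apply (flatten_time_smooth U W L HL).
  - simpl. rewrite qlift_proj by exact Hresp. apply Hcollapse.
    exists zeroI, (bp U); split; [reflexivity | left; reflexivity].
  - intro v. unfold cone_incl. rewrite qlift_proj by exact Hresp.
    unfold k. apply cyl_map_in. exact Hglue.
Qed.

Theorem cone_right_exact (U V : PFrol) (a : U -> V) :
  psmooth U V a -> right_exact U V (cone U V a) a (cone_incl U V a).
Proof.
  intros Ha W g Hg. split.
  - intro Hnull.
    assert (Hhom : phomotopic U W (fun _ => bp W) (fun u => g (a u))).
    { apply (hrel_nullhomotopic U W _ _ Hnull), phom_refl, const_psmooth. }
    destruct Hhom as [L [HL [HL0 [HL1 HLb]]]].
    destruct (cone_extension U V W a g L Hg HL HL0 HL1 HLb) as [h [Hh Hext]].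
    exists h. split; auto.
    replace (fun v => h (cone_incl U V a v)) with g by (apply functional_extensionality; auto).
    apply rst_refl.
  - intros [h [Hh Hgh]].
    apply rst_trans with (fun u => h (cone_incl U V a (a u))).
    + exact (hrel_precomp U V W a Ha _ _ Hgh).
    + apply rst_sym, rst_step, cone_incl_after_nullhomotopic; auto.
Qed.

Lemma stage_psmooth (A X : PFrol) (i : A -> X) (hi : psmooth A X i) (n : nat) :
  psmooth (sdom (stage A X i n)) (scod (stage A X i n)) (smap (stage A X i n)).
Proof.
  induction n as [|n IHn]; simpl; auto.
  apply cone_incl_psmooth, (proj2 IHn).
Qed.

Theorem lemma6 (A X : PFrol) (i : A -> X) (hi : psmooth A X i) :
  forall n : nat,
    right_exact (sdom (stage A X i n)) (scod (stage A X i n)) (scod (stage A X i (S n)))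
      (smap (stage A X i n)) (smap (stage A X i (S n))).
Proof.
  intro n. apply cone_right_exact, stage_psmooth, hi.
Qed.
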